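(* Let $X$ be a random variable on $\{0,1\}^n$ and $Y$ uniform on $[n]$, independent of $X$. Suppose the statistical distance between the joint distribution of $(X_Y,Y)$ and that of $(U_1,Y)$ (with $U_1$ a uniform bit independent of $Y$) exceeds $\delta$. Then there exists $\alpha\in\{0,1\}^n$ with $$\Pr\Big[d(X,\alpha)\le\tfrac12-\tfrac{\delta}{2}\Big]>\delta,$$ where $d(\cdot,\cdot)$ is the relative Hamming distance.
   Context: $X_Y$ denotes the $Y$-th bit of $X$. The relative Hamming distance between $u,v\in\{0,1\}^n$ is $\frac1n|\{j:u_j\ne v_j\}|$. The statistical distance of two distributions $P,Q$ is $\frac12\sum_w|P(w)-Q(w)|$. *)

From HB Require Import structures.
From mathcomp Require Import all_boot all_order all_algebra.
Set Implicit Arguments. Unset Strict Implicit. Unset Printing Implicit Defensive.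
Import Order.TTheory GRing.Theory Num.Theory.
Local Open Scope ring_scope.

Notation bitvec n := {ffun 'I_n -> bool}.

Definition is_distr (R : realFieldType) (T : finType) (p : T -> R) : Prop :=
  (forall t, 0 <= p t) /\ \sum_(t : T) p t = 1.

Definition prob (R : realFieldType) (T : finType) (p : T -> R) (E : pred T) : R :=
  \sum_(t : T | E t) p t.

Definition stat_dist (R : realFieldType) (T : finType) (P Q : T -> R) : R :=
  2^-1 * \sum_(w : T) `|P w - Q w|.

Definition rel_hamming (R : realFieldType) (n : nat) (u v : bitvec n) : R :=
  (#|[set j : 'I_n | u j != v j]|)%:R / n%:R.

(* Joint distribution of (X_Y, Y) with X ~ pX on {0,1}^n, Y uniform on [n]
   independent of X: Pr[X_Y = b, Y = i] = (1/n) Pr[X_i = b]. *)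
Definition joint_XY_Y (R : realFieldType) (n : nat) (pX : bitvec n -> R)
  (w : bool * 'I_n) : R :=
  n%:R^-1 * prob pX (fun x => x w.2 == w.1).

Definition joint_U_Y (R : realFieldType) (n : nat) (w : bool * 'I_n) : R :=
  2^-1 * n%:R^-1.

From HB Require Import structures.
From mathcomp Require Import all_boot all_order all_algebra.
From mathcomp Require Import lra.
Import Order.TTheory GRing.Theory Num.Theory.
Local Open Scope ring_scope.

(* Take alpha to be the coordinatewise majority bit of X.  Coordinate j then
   disagrees with alpha with probability 1/2 - |Pr[X_j = 1] - 1/2|, and these
   biases average to the statistical distance SD, so E[d(X, alpha)] = 1/2 - SD
   < 1/2 - delta.  If Pr[d(X, alpha) <= (1 - delta)/2] were at most delta,
   Markov's inequality would give E[d(X, alpha)] >= (1 - delta)^2 / 2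
   >= 1/2 - delta, a contradiction. *)

Section FiniteDistribution.

Context {R : realFieldType} {T : finType} (p : T -> R).

Lemma prob_predC (E : pred T) : is_distr p -> prob p (predC E) = 1 - prob p E.
Proof. by case=> _ p1; rewrite -p1 /prob [in RHS](bigID E) /= addrAC subrr add0r. Qed.

Lemma markov_tail (f : T -> R) (t : R) :
  (forall x, 0 <= p x) -> (forall x, 0 <= f x) ->
  t * prob p (fun x => t < f x) <= \sum_x p x * f x.
Proof.
move=> p0 f0; rewrite /prob mulr_sumr [in X in _ <= X](bigID (fun x => t < f x)) /=.
rewrite -[X in X <= _]addr0; apply: lerD.
  by apply: ler_sum => x lt_t_fx; rewrite mulrC ler_wpM2l // ltW.
by apply: sumr_ge0 => x _; rewrite mulr_ge0.
Qed.

End FiniteDistribution.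

Section Coordinates.

Context {R : realFieldType} {n : nat} (pX : bitvec n -> R).

Definition bit_prob (j : 'I_n) (b : bool) : R := prob pX (fun x => x j == b).

Definition bit_bias (j : 'I_n) : R := `|bit_prob j true - 2^-1|.

Definition majority : bitvec n :=
  [ffun j => bit_prob j false <= bit_prob j true].

Lemma bit_prob_negb j b : is_distr pX -> bit_prob j (~~ b) = 1 - bit_prob j b.
Proof.
move=> dX; rewrite -prob_predC //; apply: eq_bigl => x /=.
by case: b; case: (x j).
Qed.

Lemma bit_bias_false j : is_distr pX -> `|bit_prob j false - 2^-1| = bit_bias j.
Proof.
move=> dX; rewrite /bit_bias (bit_prob_negb j true dX) -normrN; congr `|_|; lra.
Qed.

Lemma bit_prob_disagree_majority j : is_distr pX ->
  bit_prob j (~~ majority j) = 2^-1 - bit_bias j.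
Proof.
move=> dX; have := bit_prob_negb j true dX; rewrite /bit_bias ffunE /= => pf.
case: leP => [le_ft | lt_tf] /=.
  by rewrite ger0_norm; lra.
by rewrite ler0_norm; lra.
Qed.

Lemma stat_dist_bit_bias : is_distr pX ->
  stat_dist (joint_XY_Y pX) (@joint_U_Y R n) = n%:R^-1 * \sum_j bit_bias j.
Proof.
move=> dX; rewrite /stat_dist /joint_XY_Y /joint_U_Y.
under eq_bigr => w _ do
  rewrite [_ * n%:R^-1]mulrC -mulrBr normrM ger0_norm ?invr_ge0 ?ler0n //.
rewrite -mulr_sumr -(pair_big xpredT xpredT (fun b j => `|bit_prob j b - 2^-1|)) /=.
rewrite big_bool /=; under [X in _ + X]eq_bigr => j _ do rewrite bit_bias_false //.
set a := n%:R^-1; lra.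
Qed.

Lemma expect_rel_hamming (alpha : bitvec n) :
  \sum_x pX x * rel_hamming R x alpha = n%:R^-1 * \sum_j bit_prob j (~~ alpha j).
Proof.
rewrite mulr_sumr /bit_prob /prob.
under [RHS]eq_bigr => j _ do rewrite big_mkcond mulr_sumr.
rewrite [RHS]exchange_big /=; apply: eq_bigr => x _.
rewrite /rel_hamming -sum1_card natr_sum big_mkcond /= mulr_suml mulr_sumr.
apply: eq_bigr => j _; rewrite inE.
by case: (x j); case: (alpha j); rewrite /= ?mul0r ?mulr0 ?mul1r // mulrC.
Qed.

Lemma expect_rel_hamming_majority : (0 < n)%N -> is_distr pX ->
  \sum_x pX x * rel_hamming R x majority
  = 2^-1 - stat_dist (joint_XY_Y pX) (@joint_U_Y R n).
Proof.
move=> n_gt0 dX; rewrite expect_rel_hamming stat_dist_bit_bias //.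
under eq_bigr => j _ do rewrite bit_prob_disagree_majority //.
rewrite sumrB sumr_const card_ord mulrBr -[2^-1 *+ n]mulr_natr mulrCA mulVf ?mulr1 //.
by rewrite pnatr_eq0 -lt0n.
Qed.

End Coordinates.

Lemma rel_hamming_ge0 (R : realFieldType) {n} (u v : bitvec n) :
  0 <= rel_hamming R u v.
Proof. by rewrite divr_ge0 ?ler0n. Qed.

Theorem mainTheorem14 (R : realFieldType) (n : nat) (pX : bitvec n -> R)
  (delta : R) :
  (0 < n)%N ->
  is_distr pX ->
  stat_dist (joint_XY_Y pX) (@joint_U_Y R n) > delta ->
  exists alpha : bitvec n,
    prob pX (fun x => @rel_hamming R n x alpha <= 2^-1 - delta / 2) > delta.
Proof.
move=> n_gt0 dX lt_delta_SD; exists (majority pX).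
set t := 2^-1 - delta / 2; set close := fun x => rel_hamming R x (majority pX) <= t.
rewrite ltNge; apply/negP => le_close_delta.
have E_eq := expect_rel_hamming_majority pX n_gt0 dX.
have E_ge0 : 0 <= \sum_x pX x * rel_hamming R x (majority pX).
  by apply: sumr_ge0 => x _; rewrite mulr_ge0 ?rel_hamming_ge0 //; case: dX.
have far_compl : prob pX (fun x => t < rel_hamming R x (majority pX))
                 = 1 - prob pX close.
  rewrite -prob_predC //; apply: eq_bigl => x; by rewrite /= ltNge.
have := markov_tail pX (fun x => rel_hamming R x (majority pX)) t (proj1 dX)
  (fun x => rel_hamming_ge0 R x _).
rewrite far_compl E_eq /t => markov.
have delta_lt_half : delta < 2^-1 by lra.
nra.
Qed.
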